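(* Let $(X,\leqslant)$ be a finite partially ordered set, $U$ a finite set of users and $\lambda\colon U\to X$. Then for any directed path $x_1x_2\dots x_p$ with $p>2$ in $H^*=(X,E_0^* )$ (that is, $x_1>x_2>\dots>x_p$), we have \[ \omega(x_1x_p)\geqslant\sum_{i=1}^{p-1}\omega(x_ix_{i+1}). \]
   Context: $E_0^*=\{xy:x,y\in X,\ x>y\}$. $U(x)=\{u\in U:\lambda(u)=x\}$; for $yz\in E_0^*$, $\gamma(yz)=\{x\in X:x\geqslant z,\ x\not\geqslant y\}$ and $\omega(yz)=\sum_{x\in\gamma(yz)}|U(x)|$. *)

From mathcomp Require Import all_boot all_order.
Set Implicit Arguments. Unset Strict Implicit. Unset Printing Implicit Defensive.
Import Order.POrderTheory.
Local Open Scope order_scope.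

Section Defs.
Variables (d : Order.disp_t) (X : finPOrderType d) (U : finType) (lam : U -> X).

Definition Uof (x : X) : {set U} := [set u | lam u == x].

Definition gamma (y z : X) : {set X} := [set x | (z <= x) && ~~ (y <= x)].

Definition omega (y z : X) : nat := (\sum_(x in gamma y z) #|Uof x|)%N.
End Defs.

(* For [z <= y <= w], every [x >= z] either lies above [y] or not, which splits
   [gamma w z] into the disjoint sets [gamma w y] and [gamma y z]. Hence [omega]
   is additive along decreasing chains, and the inequality holds with equality. *)
From mathcomp Require Import all_boot all_order.
Local Open Scope order_scope.
Import Order.POrderTheory.
Set Implicit Arguments. Unset Strict Implicit.

Section Omega.
Variables (d : Order.disp_t) (X : finPOrderType d) (U : finType) (lam : U -> X).

Lemma gamma_id (y : X) : gamma y y = set0.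
Proof. by apply/setP => x; rewrite !inE andbN. Qed.

Lemma omega_id (y : X) : omega lam y y = 0%N.
Proof. by rewrite /omega gamma_id big_set0. Qed.

Lemma omega_split (w y z : X) : z <= y -> y <= w ->
  omega lam w z = (omega lam w y + omega lam y z)%N.
Proof.
move=> le_zy le_yw; rewrite /omega (bigID (fun x => y <= x)) /=.
congr (_ + _)%N; apply: eq_bigl => x; rewrite !inE.
- have [le_yx | _] := boolP (y <= x); rewrite ?andbT ?andbF ?andTb //.
  by rewrite (le_trans le_zy le_yx).
- have [_ | nle_yx] := boolP (y <= x); rewrite ?andbT ?andbF ?andTb //.
  have [le_wx | _] := boolP (w <= x); rewrite ?andbT ?andbF //.
  by rewrite (le_trans le_yw le_wx) in nle_yx.
Qed.

Section Chain.
Variables (x : nat -> X) (m n : nat).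
Hypothesis x_dec : forall i, (m <= i)%N -> (i < n)%N -> x i.+1 <= x i.

Lemma chain_le k : (m <= k <= n)%N -> x k <= x m.
Proof.
elim: k => [|k IHk]; first by rewrite leqn0 => /andP [/eqP ->].
rewrite leq_eqVlt ltnS => /andP [/orP [/eqP <- // | le_mk] lt_kn].
apply: le_trans (x_dec le_mk lt_kn) _.
by rewrite IHk // le_mk ltnW.
Qed.

Lemma omega_telescope k : (m <= k <= n)%N ->
  (\sum_(m <= i < k) omega lam (x i) (x i.+1))%N = omega lam (x m) (x k).
Proof.
elim: k => [|k IHk]; first by rewrite leqn0 => /andP [/eqP -> _]; rewrite big_geq ?omega_id.
rewrite leq_eqVlt ltnS => /andP [/orP [/eqP <- | le_mk] lt_kn].
  by rewrite big_geq ?omega_id.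
have le_kn : (m <= k <= n)%N by rewrite le_mk ltnW.
rewrite big_nat_recr //= IHk //.
by rewrite -omega_split // ?x_dec // chain_le.
Qed.

End Chain.
End Omega.

Theorem corollary3 (d : Order.disp_t) (X : finPOrderType d) (U : finType)
    (lam : U -> X) (p : nat) (x : nat -> X) :
  (2 < p)%N ->
  (forall i : nat, (1 <= i)%N -> (i < p)%N -> x i.+1 < x i) ->
  (omega lam (x 1%N) (x p) >= \sum_(1 <= i < p) omega lam (x i) (x i.+1))%N.
Proof.
move=> lt2p x_lt.
have x_dec i : (1 <= i)%N -> (i < p)%N -> x i.+1 <= x i.
  by move=> le1i ltip; apply/ltW/x_lt.
by rewrite (omega_telescope lam x_dec) // (ltnW (ltnW lt2p)) leqnn.
Qed.
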